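(* Fix $\lambda \geqslant 0$ and let $g(\lambda) = (1-e^{-\lambda})/\lambda$ for $\lambda>0$, $g(0)=1$. For a compactly supported Borel probability measure $\rho$ on $\mathbb R$ with $\operatorname{supp}\rho \subset [0,+\infty)$ and $\langle \rho, x\rangle = \int x\,d\rho(x) \neq 0$, define the measure $$A(\rho) = \left(1 - g(\lambda) + g(\lambda)\frac{x}{\langle \rho, x\rangle}\right)\rho,$$ i.e. the measure with density $x \mapsto 1 - g(\lambda) + g(\lambda)x/\langle\rho,x\rangle$ with respect to $\rho$. Let $\rho_0$ be such a measure, let $\rho_t = A^t(\rho_0)$ for $t\in\mathbb N$, and let $x_0 = \sup\operatorname{supp}\rho_0$. Then $\rho_t \to \delta_{x_0}$ as $t \to +\infty$, in the sense that $\int\phi\,d\rho_t \to \phi(x_0)$ for every continuous compactly supported function $\phi\colon\mathbb R\to\mathbb R$.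
   Context: $\delta_a$ denotes the Dirac measure at $a$. Convergence of measures is the weak (vague) convergence against continuous compactly supported test functions. *)

From HB Require Import structures.
From mathcomp Require Import all_boot all_order all_algebra.
From mathcomp Require Import all_classical all_reals all_analysis.
Set Implicit Arguments. Unset Strict Implicit. Unset Printing Implicit Defensive.
Import Order.TTheory GRing.Theory Num.Theory.
Import numFieldNormedType.Exports.
Local Open Scope classical_set_scope.
Local Open Scope ring_scope.

Definition gfun (R : realType) (lam : R) : R :=
  if lam == 0 then 1 else (1 - expR (- lam)) / lam.

Definition msupp (R : realType) (mu : {measure set R -> \bar R}) : set R :=
  [set x | forall U : set R, open U -> U x -> (0 < mu U)%E].

Definition mean (R : realType) (mu : {measure set R -> \bar R}) : R :=
  Rintegral mu setT (fun x => x).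

Definition Adens (R : realType) (lam : R) (mu : {measure set R -> \bar R})
  (x : R) : R :=
  1 - gfun lam + gfun lam * x / mean mu.

From HB Require Import structures.
From mathcomp Require Import all_boot all_order all_algebra.
From mathcomp Require Import all_classical all_reals all_analysis.
From mathcomp Require Import measurable_realfun lra.
Import Order.TTheory GRing.Theory Num.Theory.
Import numFieldNormedType.Exports.
Local Open Scope classical_set_scope.
Local Open Scope ring_scope.

(* The support of rho_0 lies in [0, x0], hence every rho_t is carried by
   [0, x0], and the density 1 - g + g x / m of A(rho_t), where m = <rho_t, x>,
   is affine and nondecreasing in x.  Fix 0 <= y < z <= x0.  One step multiplies
   the mass of [0, y] by at most 1 - g + g y / m and that of [z, x0] by at
   least 1 - g + g z / m; since m <= x0 the ratio of these factors is at most
   q = (1 - g + g y / x0) / (1 - g + g z / x0) < 1.  As rho_0 gives [z, x0]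
   positive mass, rho_t([0, y]) = O(q^t): the mass concentrates at x0, and the
   integral of phi, continuous at x0 and bounded on [0, x0], tends to phi x0. *)

Section measure_support.
Context {R : realType} (mu : {measure set R -> \bar R}).

Lemma not_msupp_null_open x :
  ~ msupp mu x -> exists U, [/\ open U, U x & mu U = 0%E].
Proof.
move=> /existsNP[U] /not_implyP[oU] /not_implyP[Ux] /negP.
by rewrite -leNgt => U0; exists U; split => //; apply/eqP; rewrite eq_le U0 measure_ge0.
Qed.

(* Every point outside the support has a null neighbourhood with rational
   end points, and there are countably many of those. *)
Lemma msuppC_negligible : mu.-negligible (~` msupp mu).
Proof.
pose I (pq : rat * rat) : set R := `]ratr pq.1, ratr pq.2[%classic.
pose F n := if unpickle n is Some pq then
  (if mu (I pq) == 0%E then I pq else set0) else set0.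
apply: (negligibleS _ (@negligible_bigcup _ _ _ mu F _)); last first.
  move=> n; rewrite /F; case: unpickle => [pq|]; last exact: negligible_set0.
  case: eqP => [I0|_]; last exact: negligible_set0.
  by apply/negligibleP; [exact: measurable_itv|].
move=> x /not_msupp_null_open[U [oU Ux U0]].
have /nbhs_ballP[e /= e0 xeU] := oU x Ux.
have [p] : exists p, ratr p \in `]x - e, x[ by apply: rat_in_itvoo; rewrite gtrBl.
rewrite in_itv /= => /andP[exp px].
have [q] : exists q, ratr q \in `]x, x + e[ by apply: rat_in_itvoo; rewrite ltrDl.
rewrite in_itv /= => /andP[xq qxe].
have IU : I (p, q) `<=` U.
  move=> y; rewrite /I /= in_itv /= => /andP[py yq]; apply: xeU.
  rewrite /ball /= ltr_norml; apply/andP; split.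
  - by rewrite ltrNl opprB ltrBlDl; lra.
  - by rewrite ltrBlDl; lra.
exists (pickle (p, q)); first by [].
rewrite /F pickleK.
have -> : mu (I (p, q)) = 0%E.
  apply/eqP; rewrite eq_le measure_ge0 andbT -U0 le_measure// inE.
    exact: measurable_itv.
  exact: open_measurable.
by rewrite eqxx /I /= in_itv /= px xq.
Qed.

Lemma msupp_gt0 (A U : set R) : measurable A -> open U ->
  U `&` msupp mu !=set0 -> U `&` msupp mu `<=` A -> (0 < mu A)%E.
Proof.
move=> mA oU [a [Ua Sa]] USA.
have [N [mN N0 CN]] := msuppC_negligible.
have UAN : (mu U <= mu (A `|` N))%E.
  apply: le_measure; rewrite ?inE; [exact: open_measurable|exact: measurableU|].
  by move=> x Ux; have [Sx|/CN] := pselect (msupp mu x); [left; exact: USA|right].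
apply: (lt_le_trans (Sa U oU Ua)); apply: (le_trans UAN).
have -> : mu A = (mu A + mu N)%E by rewrite N0 adde0.
exact: measureU2.
Qed.

End measure_support.

Lemma msupp_neq0 {R : realType} (P : probability R R) : msupp P !=set0.
Proof.
apply/set0P/negP => /eqP S0.
have [N [mN N0 CN]] := msuppC_negligible P.
have : (P setT <= P N)%E.
  by apply: le_measure; rewrite ?inE // -setC0 -S0.
by rewrite probability_setT N0 lee_fin ler10.
Qed.

Lemma continuous_compact_integrable_prob {R : realType}
    (mu : probability R R) (f : R -> R) (A : set R) :
  compact A -> continuous f -> mu.-integrable A (EFin \o f).
Proof.
move=> cA cf; have mA := compact_measurable cA.
apply: measurable_bounded_integrable => //.
- by rewrite ltey_eq fin_num_measure.
- exact: measurable_funS (continuous_measurable_fun cf).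
- have /compact_bounded[M [_ fM]] := continuous_compact (continuous_subspaceT cf) cA.
  by exists M; split; rewrite ?num_real // => ? ? ? ?; exact: fM.
Qed.

Lemma fine_probability_le1 {R : realType} (P : probability R R) (S : set R) :
  measurable S -> fine (P S) <= 1.
Proof. by move=> mS; rewrite -lee_fin fineK ?fin_num_measure // probability_le1. Qed.

Section concentrated_probability.
Context {R : realType} {P : probability R R} {a b : R}.
Hypothesis P_out : P (~` `[a, b]%classic) = 0%E.
Local Notation K := (`[a, b]%classic : set R).

Let mK : measurable K. Proof. exact: measurable_itv. Qed.

Let integrableK (f : R -> R) : continuous f -> P.-integrable K (EFin \o f).
Proof. exact: continuous_compact_integrable_prob P _ _ (@segment_compact _ _ _). Qed.

Lemma probability_concentrated : fine (P K) = 1.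
Proof.
have := probability_setC P mK.
rewrite P_out -(fineK (fin_num_measure P _ mK)) => /(congr1 fine) /= PK.
by apply/eqP; rewrite -subr_eq0 -oppr_eq0 opprB -PK.
Qed.

Lemma integral_concentrated (f : R -> \bar R) : measurable_fun setT f ->
  (\int[P]_x f x = \int[P]_(x in K) f x)%E.
Proof.
move=> mf; rewrite (integral_mkcond K); apply: ae_eq_integral => //.
  by apply/(measurable_restrictT _ mK); exact: measurable_funS mf.
exists (~` K); split; [exact: measurableC|exact: P_out|].
by move=> x /= fKx Kx; apply: fKx => _; rewrite patchE mem_set.
Qed.

Lemma Rintegral_concentrated (f : R -> R) : measurable_fun setT f ->
  \int[P]_x f x = \int[P]_(x in K) f x.
Proof.
by move=> mf; rewrite /Rintegral integral_concentrated //; exact/measurable_EFinP.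
Qed.

Lemma mean_le_concentrated : mean P <= b.
Proof.
rewrite /mean Rintegral_concentrated //.
apply: le_trans (le_Rintegral (f2 := cst b) mK _ _ _) _.
- exact: integrableK (fun x => cvg_id).
- by apply: integrableK; exact: cst_continuous.
- by move=> x /=; rewrite in_itv /= => /andP[].
by rewrite Rintegral_cst // probability_concentrated mulr1.
Qed.

Lemma mean_ge_concentrated z : 0 <= a <= z -> z <= b ->
  z * fine (P `[z, b]%classic) <= mean P.
Proof.
move=> /andP[a0 az] zb; have iid := integrableK id (fun _ => cvg_id).
rewrite /mean Rintegral_concentrated //.
rewrite (@itv_bndbnd_setU _ _ (BLeft a) (BLeft z) (BRight b)) ?bnd_simp //.
rewrite Rintegral_setU //; first last.
- by apply/disj_setPS => x [] /=; rewrite !in_itv /= => /andP[_ xz] /andP[zx _]; lra.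
- by rewrite -itv_bndbnd_setU ?bnd_simp.
rewrite -[leLHS]add0r; apply: lerD.
  by apply: Rintegral_ge0 => x /=; rewrite in_itv /= => /andP[ax _]; lra.
rewrite -Rintegral_cst //; apply: le_Rintegral => //.
- apply: integrableS (integrableK _ _) => //; first exact: subset_itvr.
  exact: cst_continuous.
- by apply: integrableS iid => //; exact: subset_itvr.
- by move=> x /=; rewrite in_itv /= => /andP[].
Qed.

Lemma Rintegral_concentrated_dist (phi : R -> R) (y M e : R) :
  continuous phi -> a <= y <= b -> 0 <= e ->
  (forall x, a <= x <= y -> `|phi b - phi x| <= M) ->
  (forall x, y < x <= b -> `|phi b - phi x| <= e) ->
  `|phi b - \int[P]_x phi x| <= M * fine (P `[a, y]%classic) + e.
Proof.
move=> cphi /andP[ay yb] e0 leM lee.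
have cdiff : continuous (fun x => phi b - phi x).
  by move=> x; apply: cvgB; [exact: cvg_cst|exact: cphi].
have cdist : continuous (fun x => `|phi b - phi x|).
  by move=> x; apply: cvg_norm; exact: cdiff.
have [my mr] : measurable (`[a, y]%classic : set R) /\
  measurable (`]y, b]%classic : set R) by split; exact: measurable_itv.
have sub_yb : `]y, b]%classic `<=` K.
  by move=> x /=; rewrite !in_itv /= => /andP[yx ->]; rewrite andbT; lra.
rewrite Rintegral_concentrated; last exact: continuous_measurable_fun.
have -> : phi b = \int[P]_(x in K) cst (phi b) x.
  by rewrite Rintegral_cst // probability_concentrated mulr1.
rewrite -RintegralB //; last 2 first.
- by apply: integrableK; exact: cst_continuous.
- exact: integrableK cphi.
apply: le_trans (le_normr_Rintegral mK (integrableK _ cdiff)) _.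
rewrite (@itv_bndbnd_setU _ _ (BLeft a) (BRight y) (BRight b)) ?bnd_simp //.
rewrite Rintegral_setU //; last 2 first.
- by rewrite -itv_bndbnd_setU ?bnd_simp //; exact: integrableK.
- by apply/disj_setPS => x [] /=; rewrite !in_itv /= => /andP[_ xy] /andP[yx _]; lra.
have low : \int[P]_(x in `[a, y]) `|phi b - phi x| <= M * fine (P `[a, y]%classic).
  rewrite -Rintegral_cst //; apply: (le_Rintegral my).
  - by apply: integrableS (integrableK _ cdist) => //; exact: subset_itvl.
  - apply: integrableS (integrableK _ _) => //; first exact: subset_itvl.
    exact: cst_continuous.
  - by move=> x /=; rewrite in_itv /=; exact: leM.
have high : \int[P]_(x in `]y, b]) `|phi b - phi x| <= e.
  apply: (@le_trans _ _ (e * fine (P `]y, b]%classic))); last first.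
    by rewrite ler_piMr // fine_probability_le1.
  rewrite -Rintegral_cst //; apply: (le_Rintegral mr).
  - exact: integrableS (integrableK _ cdist).
  - by apply: integrableS (integrableK _ _) => //; exact: cst_continuous.
  - by move=> x /=; rewrite in_itv /=; exact: lee.
exact: lerD.
Qed.

End concentrated_probability.

Lemma cvg_Rintegral_concentrated {R : realType} (mu : nat -> probability R R)
    (a b : R) (phi : R -> R) :
  a < b -> (forall t, mu t (~` `[a, b]%classic) = 0%E) ->
  (forall y, a <= y < b -> fine (mu t `[a, y]%classic) @[t --> \oo] --> 0) ->
  continuous phi -> \int[mu t]_x phi x @[t --> \oo] --> phi b.
Proof.
move=> ab mu_out mu_low cphi.
have cdist : continuous (fun x => `|phi b - phi x|).
  by move=> x; apply: cvg_norm; apply: cvgB; [exact: cvg_cst|exact: cphi].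
have [c _ leM] := EVT_max (ltW ab) (continuous_subspaceT cdist).
apply/cvgrPdist_le => e e0; have e2 : 0 < e / 2 by lra.
move/cvgrPdist_le: (cphi b) => /(_ _ e2) /nbhs_ballP[d /= d0 near_b].
set y := b - Num.min d (b - a).
have ay : a <= y by rewrite /y lerBrDl -lerBrDr ge_min lexx orbT.
have yb : y < b by rewrite /y gtrBl lt_min d0 subr_gt0.
set M := `|phi b - phi c|.
have : M * fine (mu t `[a, y]%classic) @[t --> \oo] --> 0.
  by rewrite -(mulr0 M); apply: cvgM; [exact: cvg_cst|apply: mu_low; rewrite ay].
move=> /cvgr0Pnorm_le /(_ _ e2); apply: filterS => t small.
apply: le_trans (Rintegral_concentrated_dist (mu_out t) _ y M _ cphi _ (ltW e2) _ _) _.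
- by rewrite ay ltW.
- by move=> x /andP[ax xy]; apply: leM; rewrite in_itv /= ax /=; lra.
- move=> x /andP[yx xb]; apply: near_b; rewrite /ball /= ger0_norm ?subr_ge0 //.
  have : b - y <= d by rewrite /y opprB addrC subrK ge_min lexx.
  lra.
- by have := ler_norm (M * fine (mu t `[a, y]%classic)); lra.
Qed.

Section density.
Context {R : realType} (lam : R).
Hypothesis lam_ge0 : 0 <= lam.

Lemma gfun_gt0 : 0 < gfun lam.
Proof.
rewrite /gfun; case: eqP => [_|/eqP lam_neq0]; first exact: ltr01.
have lam_gt0 : 0 < lam by rewrite lt_neqAle eq_sym lam_neq0.
by rewrite divr_gt0 // subr_gt0 -expR0 ltr_expR oppr_lt0.
Qed.

Lemma gfun_le1 : gfun lam <= 1.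
Proof.
rewrite /gfun; case: eqP => [//|/eqP lam_neq0].
have lam_gt0 : 0 < lam by rewrite lt_neqAle eq_sym lam_neq0.
by rewrite ler_pdivrMr // mul1r; have := expR_ge1Dx (- lam); lra.
Qed.

Definition dens (m x : R) : R := 1 - gfun lam + gfun lam * x / m.

Lemma AdensE (mu : {measure set R -> \bar R}) x :
  Adens lam mu x = dens (mean mu) x.
Proof. by []. Qed.

Lemma dens_ge0 m x : 0 < m -> 0 <= x -> 0 <= dens m x.
Proof.
move=> m_gt0 x_ge0; have := gfun_le1; have := gfun_gt0 => g0 g1.
by rewrite /dens addr_ge0 ?subr_ge0 // divr_ge0 ?mulr_ge0 // ltW.
Qed.

Lemma dens_gt0 m x : 0 < m -> 0 < x -> 0 < dens m x.
Proof.
move=> m_gt0 x_gt0; have := gfun_le1; have := gfun_gt0 => g0 g1.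
by rewrite /dens ltr_wpDl ?subr_ge0 // divr_gt0 ?mulr_gt0.
Qed.

Lemma dens_le m x y : 0 < m -> x <= y -> dens m x <= dens m y.
Proof.
move=> m_gt0 xy; rewrite /dens lerD2l ler_pM2r ?invr_gt0 //.
by rewrite ler_pM2l // gfun_gt0.
Qed.

Lemma dens_lt m x y : 0 < m -> x < y -> dens m x < dens m y.
Proof.
move=> m_gt0 xy; rewrite /dens ltrD2l ltr_pM2r ?invr_gt0 //.
by rewrite ltr_pM2l // gfun_gt0.
Qed.

Lemma measurable_dens m : measurable_fun setT (dens m).
Proof.
by apply: measurable_funD => //; apply: measurable_funM => //; apply: measurable_funM.
Qed.

(* The difference of the two sides is (1 - g) g (z - y) (1/m - 1/m'). *)
Lemma dens_ratio_le m m' y z : 0 < m <= m' -> 0 <= y <= z ->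
  dens m y * dens m' z <= dens m' y * dens m z.
Proof.
move=> /andP[m_gt0 mm'] /andP[y_ge0 yz]; have := gfun_le1; have := gfun_gt0 => g0 g1.
have m'_gt0 : 0 < m' by exact: lt_le_trans mm'.
have inv_le : m'^-1 <= m^-1 by rewrite lef_pV2 ?posrE.
have : 0 <= (1 - gfun lam) * gfun lam * (z - y) * (m^-1 - m'^-1).
  by rewrite !mulr_ge0 // ?subr_ge0 // ltW.
by rewrite /dens; nra.
Qed.

End density.

Section dynamics.
Context {R : realType} {lam : R} {rho : nat -> probability R R}.
Hypotheses (lam_ge0 : 0 <= lam) (supp_compact : compact (msupp (rho 0%N)))
  (supp_ge0 : msupp (rho 0%N) `<=` [set x | 0 <= x])
  (mean0_neq0 : mean (rho 0%N) != 0)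
  (rhoS : forall (t : nat) (S : set R), measurable S ->
     rho t.+1 S = (\int[rho t]_(x in S) (Adens lam (rho t) x)%:E)%E).

Local Notation x0 := (sup (msupp (rho 0%N))).
Local Notation K := (`[0, x0]%classic : set R).

Lemma msupp0_sub : msupp (rho 0%N) `<=` K.
Proof.
have [M [_ bnd]] := compact_bounded supp_compact.
have ub : has_ubound (msupp (rho 0%N)).
  exists (`|M| + 1) => x Sx; apply: le_trans (ler_norm x) (bnd _ _ x Sx).
  by rewrite (le_lt_trans (ler_norm M)) // ltrDl.
move=> x Sx; rewrite /= in_itv /= supp_ge0 //=.
exact: ub_le_sup.
Qed.

Lemma x0_ge0 : 0 <= x0.
Proof.
have [x Sx] := msupp_neq0 (rho 0%N).
by have := msupp0_sub _ Sx; rewrite /= in_itv /= => /andP[/le_trans]; apply.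
Qed.

Lemma rho_out t : rho t (~` K) = 0%E.
Proof.
have mK : measurable K by exact: measurable_itv.
elim: t => [|t IH].
  have [N [mN N0 CN]] := msuppC_negligible (rho 0%N).
  apply/le_anti; rewrite measure_ge0 andbT -N0 le_measure ?inE //.
    exact: measurableC.
  by move=> x Kx; apply: CN => /msupp0_sub.
rewrite rhoS; last exact: measurableC.
apply: null_set_integral => //; first exact: measurableC.
by apply/measurable_EFinP; exact: measurable_funS (measurable_dens _ _).
Qed.

Lemma mean_le_x0 t : mean (rho t) <= x0.
Proof. exact: mean_le_concentrated (rho_out t). Qed.

Lemma mean_ge t z : 0 <= z <= x0 ->
  z * fine (rho t `[z, x0]%classic) <= mean (rho t).
Proof.
by move=> /andP[z0 zx0]; apply: (mean_ge_concentrated (rho_out t)) => //; rewrite lexx.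
Qed.

Lemma x0_gt0 : 0 < x0.
Proof.
rewrite lt_neqAle x0_ge0 andbT; apply/eqP => x0_eq0.
have m_le0 : mean (rho 0%N) <= 0 by rewrite x0_eq0; exact: mean_le_x0.
have m_ge0 : 0 <= mean (rho 0%N).
  by have := @mean_ge 0%N 0; rewrite mul0r lexx x0_ge0; apply.
by move: mean0_neq0; rewrite eq_le m_le0 m_ge0.
Qed.

Lemma mass0_top_gt0 z : z < x0 -> 0 < fine (rho 0%N `[z, x0]%classic).
Proof.
move=> zx0; have mz : measurable (`[z, x0]%classic : set R) by exact: measurable_itv.
apply: fine_gt0; rewrite -ge0_fin_numE ?measure_ge0 // fin_num_measure // andbT.
apply: (msupp_gt0 (rho 0%N) _ _ mz (@open_gt _ z)).
  by have [x Sx zx] := sup_gt (msupp_neq0 (rho 0%N)) zx0; exists x.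
move=> x [/= zx /msupp0_sub]; rewrite /= !in_itv /= (ltW zx).
by case/andP.
Qed.

Lemma rho_succ_le t (S : set R) (c : R) : measurable S -> 0 < mean (rho t) ->
  (forall x, S x -> 0 <= x /\ Adens lam (rho t) x <= c) ->
  fine (rho t.+1 S) <= c * fine (rho t S).
Proof.
move=> mS m_gt0 Sc; rewrite -lee_fin EFinM !fineK ?fin_num_measure // rhoS //.
rewrite -integral_cst //; apply: ge0_le_integral => //.
- by move=> x Sx; rewrite lee_fin AdensE dens_ge0 //; case: (Sc x Sx).
- by apply/measurable_EFinP; exact: measurable_funS (measurable_dens _ _).
- by move=> x Sx; rewrite lee_fin; case: (Sc x Sx).
Qed.

Lemma rho_succ_ge t (S : set R) (c : R) : measurable S -> 0 <= c ->
  (forall x, S x -> c <= Adens lam (rho t) x) ->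
  c * fine (rho t S) <= fine (rho t.+1 S).
Proof.
move=> mS c_ge0 Sc; rewrite -lee_fin EFinM !fineK ?fin_num_measure // rhoS //.
rewrite -integral_cst //; apply: ge0_le_integral => //.
by apply/measurable_EFinP; exact: measurable_funS (measurable_dens _ _).
Qed.

Lemma mass_top_gt0 t : 0 < fine (rho t `[x0 / 2, x0]%classic).
Proof.
have x0_gt0 := x0_gt0; have mT : measurable (`[x0 / 2, x0]%classic : set R) by [].
elim: t => [|t IH]; first by apply: mass0_top_gt0; lra.
have m_gt0 : 0 < mean (rho t).
  apply: lt_le_trans (mean_ge t (x0 / 2) _); last by apply/andP; lra.
  by rewrite mulr_gt0 //; lra.
have c_gt0 : 0 < Adens lam (rho t) (x0 / 2) by rewrite AdensE dens_gt0 //; lra.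
apply: lt_le_trans (rho_succ_ge t _ _ mT (ltW c_gt0) _); first exact: mulr_gt0.
by move=> x /=; rewrite in_itv /= => /andP[x0x _]; rewrite !AdensE dens_le.
Qed.

Lemma mean_gt0 t : 0 < mean (rho t).
Proof.
have x0_gt0 := x0_gt0.
apply: lt_le_trans (mean_ge t (x0 / 2) _); last by apply/andP; lra.
by rewrite mulr_gt0 ?mass_top_gt0 //; lra.
Qed.

Lemma mass_low_decay y z : 0 <= y -> y < z -> z <= x0 -> forall t,
  fine (rho t `[0, y]%classic) * fine (rho 0%N `[z, x0]%classic) <=
  (dens lam x0 y / dens lam x0 z) ^+ t * fine (rho t `[z, x0]%classic).
Proof.
move=> y_ge0 yz zx0; have x0_gt0 := x0_gt0.
have dz_gt0 : 0 < dens lam x0 z by apply: dens_gt0 => //; lra.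
set q := dens lam x0 y / dens lam x0 z.
have q_ge0 : 0 <= q by apply: divr_ge0; [exact: dens_ge0|exact: ltW].
have [mS mT] : measurable (`[0, y]%classic : set R) /\
  measurable (`[z, x0]%classic : set R) by [].
have rho_ge0 t (S : set R) : 0 <= fine (rho t S) by exact/fine_ge0/measure_ge0.
elim=> [|t IH].
  by rewrite expr0 mul1r ler_piMl ?fine_probability_le1.
have m_gt0 := mean_gt0 t.
set cy := Adens lam (rho t) y; set cz := Adens lam (rho t) z.
have low_step : fine (rho t.+1 `[0, y]%classic) <= cy * fine (rho t `[0, y]%classic).
  apply: rho_succ_le => // x /=; rewrite in_itv /= => /andP[x_ge0 xy].
  by split => //; rewrite !AdensE dens_le.
have top_step : cz * fine (rho t `[z, x0]%classic) <= fine (rho t.+1 `[z, x0]%classic).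
  apply: rho_succ_ge => //; first by rewrite /cz AdensE dens_ge0 //; lra.
  by move=> x /=; rewrite in_itv /= => /andP[zx _]; rewrite !AdensE dens_le.
have cy_le : cy <= q * cz.
  rewrite /q mulrAC ler_pdivlMr // /cy /cz !AdensE dens_ratio_le //.
    by rewrite m_gt0 mean_le_x0.
  by rewrite y_ge0 ltW.
have cy_ge0 : 0 <= cy by rewrite /cy AdensE dens_ge0.
rewrite exprS -mulrA; apply: le_trans (ler_wpM2r (rho_ge0 _ _) low_step) _.
rewrite -mulrA; apply: le_trans (ler_wpM2l cy_ge0 IH) _.
apply: le_trans (ler_wpM2r _ cy_le) _; first by rewrite mulr_ge0 ?exprn_ge0.
by rewrite -mulrA ler_wpM2l // mulrCA ler_wpM2l ?exprn_ge0.
Qed.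

Lemma mass_low_cvg0 y : 0 <= y < x0 ->
  fine (rho t `[0, y]%classic) @[t --> \oo] --> 0.
Proof.
move=> /andP[y_ge0 yx0]; have x0_gt0 := x0_gt0.
pose z := (y + x0) / 2; have yz : y < z by rewrite /z; lra.
have zx0 : z < x0 by rewrite /z; lra.
pose q := dens lam x0 y / dens lam x0 z.
have dz_gt0 : 0 < dens lam x0 z by apply: dens_gt0 => //; lra.
have q_ge0 : 0 <= q by apply: divr_ge0; [exact: dens_ge0|exact: ltW].
have q_lt1 : q < 1 by rewrite ltr_pdivrMr // mul1r dens_lt.
pose p := fine (rho 0%N `[z, x0]%classic).
have p_gt0 : 0 < p := mass0_top_gt0 _ zx0.
apply: (@squeeze_cvgr _ _ _ _ (cst 0) (fun t => q ^+ t / p)).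
- near=> t; rewrite fine_ge0 ?measure_ge0 //= ler_pdivlMr //.
  apply: le_trans (mass_low_decay _ _ y_ge0 yz (ltW zx0) t) _.
  by rewrite ler_piMr ?exprn_ge0 ?fine_probability_le1.
- exact: cvg_cst.
- rewrite -(mul0r p^-1).
  by apply: cvgM; [apply: cvg_expr; rewrite ger0_norm|exact: cvg_cst].
Unshelve. all: end_near.
Qed.

End dynamics.

Theorem mainTheorem3 (R : realType) (lam : R) (rho : nat -> probability R R) :
  0 <= lam ->
  compact (msupp (rho 0%N)) ->
  msupp (rho 0%N) `<=` [set x | 0 <= x] ->
  mean (rho 0%N) != 0 ->
  (forall (t : nat) (S : set R), measurable S ->
     rho t.+1 S = (\int[rho t]_(x in S) (Adens lam (rho t) x)%:E)%E) ->
  forall phi : R -> R, continuous phi ->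
    compact (closure (phi @^-1` [set~ 0])) ->
    (fun t => Rintegral (rho t) setT phi) @ \oo --> phi (sup (msupp (rho 0%N))).
Proof.
move=> lam_ge0 supp_compact supp_ge0 mean0_neq0 rhoS phi cphi _.
apply: cvg_Rintegral_concentrated cphi => [||y].
- exact: x0_gt0 supp_compact supp_ge0 mean0_neq0 rhoS.
- exact: rho_out supp_compact supp_ge0 rhoS.
- exact: mass_low_cvg0 lam_ge0 supp_compact supp_ge0 mean0_neq0 rhoS y.
Qed.
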